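(* For all integers $m\geq 2$ and every $\lambda>-\frac12$, $$\frac{(m-1)m^2(m+1)(m+\lambda)^2(m+\lambda+1)^2}{2(2\lambda+1)(2\lambda+5)}\leq A_{2,m}\leq\frac{(m-1)m(m+1)^2(m+\lambda)^2(m+\lambda+1)(m+\lambda+2)}{2(2\lambda+1)(2\lambda+5)}.$$
   Context: Fix $\lambda>-1/2$. Define polynomials $Q_m$ by $Q_0=1$, $Q_1(\mu)=1-\frac{2(\lambda+1)(\lambda+2)}{2\lambda+1}\mu$ and, for $m\geq2$, $$Q_m-Q_{m-1}=\frac{m(2m-1)(2m+\lambda)}{(m-1+\lambda)(2m-2+\lambda)(2m-1+2\lambda)}\big[Q_{m-1}-Q_{m-2}\big]-\frac{2m(2m-1+\lambda)(2m+\lambda)}{2m-1+2\lambda}\,\mu\,Q_{m-1}(\mu).$$ Write $Q_m(\mu)=\sum_{i=0}^m(-1)^iA_{i,m}\mu^i$; thus $A_{2,m}$ is the coefficient of $\mu^2$ in $Q_m$. *)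

From mathcomp Require Import all_boot all_order all_algebra.
Set Implicit Arguments. Unset Strict Implicit. Unset Printing Implicit Defensive.
Import Order.TTheory GRing.Theory Num.Theory.
Local Open Scope ring_scope.

Section Q.
Variable R : realFieldType.
Variable lam : R.

Definition Qr (m : nat) : R :=
  (m%:R * (2 * m%:R - 1) * (2 * m%:R + lam)) /
  ((m%:R - 1 + lam) * (2 * m%:R - 2 + lam) * (2 * m%:R - 1 + 2 * lam)).

Definition Qs (m : nat) : R :=
  (2 * m%:R * (2 * m%:R - 1 + lam) * (2 * m%:R + lam)) /
  (2 * m%:R - 1 + 2 * lam).

Definition Q1 : {poly R} :=
  1 - (2 * (lam + 1) * (lam + 2) / (2 * lam + 1)) *: 'X.

(* Qaux n = (Q_n, Q_{n+1}) *)
Fixpoint Qaux (n : nat) : {poly R} * {poly R} :=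
  match n with
  | 0 => (1, Q1)
  | n'.+1 =>
      let: (a, b) := Qaux n' in
      (* a = Q_{m-2}, b = Q_{m-1}, with m = n'.+2 *)
      (b, b + Qr n'.+2 *: (b - a) - Qs n'.+2 *: ('X * b))
  end.

Definition Q (m : nat) : {poly R} := (Qaux m).1.

(* Q_m(mu) = \sum_i (-1)^i A_{i,m} mu^i *)
Definition A (i m : nat) : R := (-1) ^+ i * (Q m)`_i.
End Q.

(* The recurrence for Q_m, read coefficientwise, is a two-step linear
   recurrence for each coefficient whose inhomogeneous term is the previous
   coefficient.  Its solutions for the constant, linear and quadratic
   coefficients are explicit rational functions of m and lambda, verified by
   induction.  A_{2,m} is then a polynomial in m, and each of the two bounds
   differs from it by the positive factor (m-1)m(m+1)(m+lambda)(m+lambda+1)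
   times a polynomial whose coefficients, written in t = lambda + 1/2 > 0 and
   k = m - 2 >= 0, are all positive. *)

From mathcomp Require Import all_boot all_order all_algebra.
From mathcomp Require Import ring lra.
Set Implicit Arguments. Unset Strict Implicit. Unset Printing Implicit Defensive.
Import Order.TTheory GRing.Theory Num.Theory.
Local Open Scope ring_scope.

Section QCoefficients.
Variable R : realFieldType.
Variable lam : R.

Lemma Qaux_Q n : Qaux lam n = (Q lam n, Q lam n.+1).
Proof. by elim: n => [|n IH] //=; rewrite /Q /= IH. Qed.

Lemma QSS n :
  Q lam n.+2 = Q lam n.+1 + Qr lam n.+2 *: (Q lam n.+1 - Q lam n)
               - Qs lam n.+2 *: ('X * Q lam n.+1).
Proof. by rewrite {1}/Q /= Qaux_Q. Qed.

Lemma coef0_Q n : (Q lam n)`_0 = 1.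
Proof.
elim/ltn_ind: n => -[|[|n]] IH; first by rewrite coef1.
  by rewrite /Q /Q1 /= coefB coefZ coefX coef1 /= mulr0 subr0.
by rewrite QSS !coefE /= !IH // subrr !mulr0 addr0 subr0.
Qed.

Lemma coefS_QSS n i :
  (Q lam n.+2)`_i.+1 = (Q lam n.+1)`_i.+1
    + Qr lam n.+2 * ((Q lam n.+1)`_i.+1 - (Q lam n)`_i.+1)
    - Qs lam n.+2 * (Q lam n.+1)`_i.
Proof. by rewrite QSS !coefE. Qed.

Definition A1f (x : R) : R :=
  x * (x + 1) * (x + lam) * (x + lam + 1) / (2 * lam + 1).

Definition A2f (x : R) : R :=
  (x - 1) * x * (x + 1) * (x + lam) * (x + lam + 1)
  * (3 * (2 * lam + 3) * x ^+ 3 + 3 * (2 * lam + 3) ^+ 2 * x ^+ 2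
     + (6 * lam ^+ 3 + 31 * lam ^+ 2 + 41 * lam + 4) * x
     + (4 * lam ^+ 3 + 10 * lam ^+ 2 - 10 * lam - 28))
  / (6 * (2 * lam + 1) * (2 * lam + 3) * (2 * lam + 5)).

Lemma lam_shifts_neq0 : -1 / 2 < lam ->
  [/\ 2 * lam + 1 != 0, 2 * lam + 3 != 0 & 2 * lam + 5 != 0].
Proof. by move=> lam_gt; split; apply/lt0r_neq0; lra. Qed.

Lemma Qr_Qs_natSS n :
  Qr lam n.+2 = (n%:R + 2) * (2 * n%:R + 3) * (2 * n%:R + 4 + lam)
                / ((n%:R + 1 + lam) * (2 * n%:R + 2 + lam) * (2 * n%:R + 3 + 2 * lam))
  /\ Qs lam n.+2 = 2 * (n%:R + 2) * (2 * n%:R + 3 + lam) * (2 * n%:R + 4 + lam)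
                / (2 * n%:R + 3 + 2 * lam).
Proof.
rewrite /Qr /Qs -addn2 natrD.
by split; congr (_ / _); ring.
Qed.

Lemma Qr_Qs_den_neq0 n : -1 / 2 < lam ->
  [/\ n%:R + 1 + lam != 0, 2 * n%:R + 2 + lam != 0 & 2 * n%:R + 3 + 2 * lam != 0].
Proof.
move=> lam_gt; have n_ge0 : 0 <= n%:R :> R by [].
by split; apply/lt0r_neq0; lra.
Qed.

Lemma A1f_rec n : -1 / 2 < lam ->
  A1f (n.+2)%:R = A1f (n.+1)%:R
    + Qr lam n.+2 * (A1f (n.+1)%:R - A1f n%:R) + Qs lam n.+2.
Proof.
move=> lam_gt; have [l1 _ _] := lam_shifts_neq0 lam_gt.
have [-> ->] := Qr_Qs_natSS n.
have [d1 d2 d3] := Qr_Qs_den_neq0 n lam_gt.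
rewrite -addn2 -addn1 !natrD /A1f.
by field; rewrite d1 d2 d3 l1.
Qed.

Lemma A2f_rec n : -1 / 2 < lam ->
  A2f (n.+2)%:R = A2f (n.+1)%:R
    + Qr lam n.+2 * (A2f (n.+1)%:R - A2f n%:R) + Qs lam n.+2 * A1f (n.+1)%:R.
Proof.
move=> lam_gt; have [l1 l3 l5] := lam_shifts_neq0 lam_gt.
have [-> ->] := Qr_Qs_natSS n.
have [d1 d2 d3] := Qr_Qs_den_neq0 n lam_gt.
rewrite -addn2 -addn1 !natrD /A1f /A2f.
by field; rewrite d1 d2 d3 l1 l3 l5.
Qed.

Lemma coef1_Q n : -1 / 2 < lam -> (Q lam n)`_1 = - A1f n%:R.
Proof.
move=> lam_gt; elim/ltn_ind: n => -[|[|n]] IH.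
- by rewrite coef1 /A1f !mul0r oppr0.
- rewrite coefB coefZ coefX coef1 /A1f sub0r mulr1.
  by congr (- (_ / _)); ring.
- by rewrite coefS_QSS !IH // coef0_Q A1f_rec //; ring.
Qed.

Lemma coef2_Q n : -1 / 2 < lam -> (Q lam n)`_2 = A2f n%:R.
Proof.
move=> lam_gt; elim/ltn_ind: n => -[|[|n]] IH.
- by rewrite coef1 /A2f mulr0 !mul0r.
- by rewrite coefB coefZ coefX coef1 /A2f /=; ring.
- by rewrite coefS_QSS !IH // coef1_Q // A2f_rec //; ring.
Qed.

Lemma A2f_lower (x : R) : -1 / 2 < lam -> 2 <= x ->
  (x - 1) * x ^+ 2 * (x + 1) * (x + lam) ^+ 2 * (x + lam + 1) ^+ 2
    / (2 * (2 * lam + 1) * (2 * lam + 5)) <= A2f x.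
Proof.
move=> lam_gt x_ge2; have [l1 l3 l5] := lam_shifts_neq0 lam_gt.
rewrite -subr_ge0.
set t := lam + 1 / 2; set k := x - 2.
have t_gt0 : 0 < t by rewrite /t; lra.
have k_ge0 : 0 <= k by rewrite /k; lra.
have -> : A2f x - (x - 1) * x ^+ 2 * (x + 1) * (x + lam) ^+ 2 * (x + lam + 1) ^+ 2
                  / (2 * (2 * lam + 1) * (2 * lam + 5)) =
    (x - 1) * x * (x + 1) * (x + lam) * (x + lam + 1)
    * (4 * t ^+ 3 + 36 * t ^+ 2 + 63 * t + 11 + k * (16 * t ^+ 2 + 64 * t + 40)
       + k ^+ 2 * (12 * t + 12))
    / (6 * (2 * lam + 1) * (2 * lam + 3) * (2 * lam + 5)).
  by rewrite /A2f /t /k; field; rewrite l1 l3 l5.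
apply: divr_ge0; last by rewrite !mulr_ge0 //; lra.
apply: mulr_ge0; first by rewrite !mulr_ge0 //; lra.
have t2_ge0 : 0 <= t ^+ 2 by rewrite exprn_ge0 // ltW.
have t3_ge0 : 0 <= t ^+ 3 by rewrite exprn_ge0 // ltW.
by rewrite !addr_ge0 ?mulr_ge0 ?sqr_ge0 //; lra.
Qed.

Lemma A2f_upper (x : R) : -1 / 2 < lam -> 1 <= x ->
  A2f x <= (x - 1) * x * (x + 1) ^+ 2 * (x + lam) ^+ 2 * (x + lam + 1) * (x + lam + 2)
             / (2 * (2 * lam + 1) * (2 * lam + 5)).
Proof.
move=> lam_gt x_ge1; have [l1 l3 l5] := lam_shifts_neq0 lam_gt.
rewrite -subr_ge0.
set t := lam + 1 / 2.
have t_gt0 : 0 < t by rewrite /t; lra.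
have -> : (x - 1) * x * (x + 1) ^+ 2 * (x + lam) ^+ 2 * (x + lam + 1) * (x + lam + 2)
            / (2 * (2 * lam + 1) * (2 * lam + 5)) - A2f x =
    (x - 1) * x * (x + 1) * (x + lam) * (x + lam + 1)
    * ((2 * t ^+ 2 + 5 * t + 11) * x + (2 * t ^+ 3 + 8 * t ^+ 2 + 37 / 2 * t + 33 / 2))
    / (6 * (2 * lam + 1) * (2 * lam + 3) * (2 * lam + 5)).
  by rewrite /A2f /t; field; rewrite l1 l3 l5.
apply: divr_ge0; last by rewrite !mulr_ge0 //; lra.
apply: mulr_ge0; first by rewrite !mulr_ge0 //; lra.
have t2_ge0 : 0 <= t ^+ 2 by rewrite exprn_ge0 // ltW.
have t3_ge0 : 0 <= t ^+ 3 by rewrite exprn_ge0 // ltW.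
by rewrite addr_ge0 ?mulr_ge0 //; lra.
Qed.

End QCoefficients.

Theorem lemma3p5 (R : realFieldType) (lam : R) (m : nat) :
  -1 / 2 < lam -> (2 <= m)%N ->
  let M : R := m%:R in
  (M - 1) * M ^+ 2 * (M + 1) * (M + lam) ^+ 2 * (M + lam + 1) ^+ 2
    / (2 * (2 * lam + 1) * (2 * lam + 5)) <= A lam 2 m /\
  A lam 2 m <=
  (M - 1) * M * (M + 1) ^+ 2 * (M + lam) ^+ 2 * (M + lam + 1) * (M + lam + 2)
    / (2 * (2 * lam + 1) * (2 * lam + 5)).
Proof.
move=> lam_gt m_ge2 M.
have M_ge2 : 2 <= M by rewrite /M (ler_nat R 2 m).
have -> : A lam 2 m = A2f lam M by rewrite /A coef2_Q // sqrrN expr1n mul1r.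
by split; [apply: A2f_lower | apply: A2f_upper => //; lra].
Qed.
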